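(* Let $p$ be a prime, let $c,d$ be positive integers, let $X$ be a set with $d$ elements, let $L_c(X)$ be the free nilpotent $\mathbb{Z}_p$-Lie algebra of class $c$ on $X$, regarded inside $\widetilde{L}_c(X)=L_c(X)\otimes_{\mathbb{Z}_p}\mathbb{Q}_p$, and let $$\widehat{L}_c(X)=L_c(X)+\tfrac{1}{p}\gamma_2(L_c(X))+\dots+\tfrac{1}{p^{c-1}}\gamma_c(L_c(X)).$$ Let $I$ be an ideal of $L_c(X)$ of finite index and set $$\widehat{I}=I+\tfrac{1}{p}[I,L_c(X)]+\tfrac{1}{p^2}[I,{}_2L_c(X)]+\dots+\tfrac{1}{p^{c-1}}[I,{}_{c-1}L_c(X)]\subseteq\widetilde{L}_c(X).$$ Then $[\widehat{I},\widehat{L}_c(X)]\subseteq p\widehat{I}$; in particular $\widehat{I}$ is an ideal of $\widehat{L}_c(X)$.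
   Context: $L_c(X)$ is the free $\mathbb{Z}_p$-Lie algebra on $X$ modulo the $(c+1)$-st term of its lower central series; $\gamma_1(L)=L$, $\gamma_{i+1}(L)=[\gamma_i(L),L]$; $[I,{}_iL]=[\cdots[[I,L],L],\dots,L]$ with $i$ copies of $L$. Brackets of subsets denote $\mathbb{Z}_p$-spans of brackets. *)

From HB Require Import structures.
From mathcomp Require Import all_boot all_order all_algebra.
From mathcomp Require Import boolp.
Set Implicit Arguments. Unset Strict Implicit. Unset Printing Implicit Defensive.
Import Order.TTheory GRing.Theory Num.Theory.
Local Open Scope ring_scope.

Section Padic.
Variable p : nat.
Definition zbase : int := (p.-2.+2)%:Z.
Definition padic_coh (f : nat -> int) := forall n : nat, (f n.+1 %% zbase ^+ n)%Z = f n.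
Record padic := Padic { pval : nat -> int; pvalP : padic_coh pval }.

HB.instance Definition _ := gen_eqMixin padic.
HB.instance Definition _ := gen_choiceMixin padic.

Lemma padic_inj (x y : padic) : pval x =1 pval y -> x = y.
Proof.
case: x y => [f Hf] [g Hg] /= /funext E; subst g.
by rewrite (Prop_irrelevance Hf Hg).
Qed.

Lemma modz_mulr (a b d : int) : ((a %% (b * d))%Z = a %[mod d])%Z.
Proof.
by rewrite {2}(divz_eq a (b * d)) mulrA modzMDl.
Qed.

Lemma padic_modE (x : padic) n : (pval x n %% zbase ^+ n)%Z = pval x n.
Proof. by rewrite -(pvalP x n) modz_mod. Qed.

Lemma padic_cong (x : padic) n : (pval x n.+1 = pval x n %[mod zbase ^+ n])%Z.
Proof. by rewrite (pvalP x n) padic_modE. Qed.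

Definition mkp_fun (g : nat -> int) := fun n : nat => (g n %% zbase ^+ n)%Z.
Lemma mkp_coh (g : nat -> int) :
  (forall n, g n.+1 = g n %[mod zbase ^+ n])%Z -> padic_coh (mkp_fun g).
Proof. by move=> H n; rewrite /mkp_fun exprS modz_mulr H. Qed.

Definition pzero := Padic (@mkp_coh (fun _ => 0) (fun _ => erefl)).
Definition pone := Padic (@mkp_coh (fun _ => 1) (fun _ => erefl)).
Lemma padd_proof (x y : padic) :
  (forall n, pval x n.+1 + pval y n.+1 = pval x n + pval y n %[mod zbase ^+ n])%Z.
Proof. by move=> n; rewrite -modzDm !padic_cong modzDm. Qed.
Definition padd x y := Padic (mkp_coh (padd_proof x y)).
Lemma pmul_proof (x y : padic) :
  (forall n, pval x n.+1 * pval y n.+1 = pval x n * pval y n %[mod zbase ^+ n])%Z.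
Proof. by move=> n; rewrite -modzMm !padic_cong modzMm. Qed.
Definition pmul x y := Padic (mkp_coh (pmul_proof x y)).
Lemma popp_proof (x : padic) :
  (forall n, - pval x n.+1 = - pval x n %[mod zbase ^+ n])%Z.
Proof. by move=> n; rewrite -modzNm padic_cong modzNm. Qed.
Definition popp x := Padic (mkp_coh (popp_proof x)).

Lemma paddA : associative padd.
Proof. by move=> x y z; apply: padic_inj => n /=; rewrite /mkp_fun modzDml modzDmr addrA. Qed.
Lemma paddC : commutative padd.
Proof. by move=> x y; apply: padic_inj => n /=; rewrite /mkp_fun addrC. Qed.
Lemma padd0 : left_id pzero padd.
Proof. by move=> x; apply: padic_inj => n /=; rewrite /mkp_fun modzDml add0r padic_modE. Qed.
Lemma paddN : left_inverse pzero popp padd.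
Proof. by move=> x; apply: padic_inj => n /=; rewrite /mkp_fun modzDml addNr. Qed.

HB.instance Definition _ := GRing.isZmodule.Build padic paddA paddC padd0 paddN.

Lemma pmulA : associative pmul.
Proof. by move=> x y z; apply: padic_inj => n /=; rewrite /mkp_fun modzMml modzMmr mulrA. Qed.
Lemma pmulC : commutative pmul.
Proof. by move=> x y; apply: padic_inj => n /=; rewrite /mkp_fun mulrC. Qed.
Lemma pmul1 : left_id pone pmul.
Proof. by move=> x; apply: padic_inj => n /=; rewrite /mkp_fun modzMml mul1r padic_modE. Qed.
Lemma pmulD : left_distributive pmul padd.
Proof. by move=> x y z; apply: padic_inj => n /=; rewrite /mkp_fun modzMml modzDm mulrDl. Qed.
Lemma pone_neq0 : pone != (pzero : padic).
Proof.
apply/eqP => /(congr1 (fun x => pval x 1%N)) /=; rewrite /mkp_fun expr1 modz_small // mod0z.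
Qed.

HB.instance Definition _ := GRing.Zmodule_isComNzRing.Build padic pmulA pmulC pmul1 pmulD pone_neq0.

End Padic.

(* Z_p for a prime p (for p prime, p.-2.+2 = p, so padic p is the ring of p-adic integers). *)

Record lieAlg (R : nzRingType) := LieAlg {
  lie_sort :> lmodType R;
  lie_br : lie_sort -> lie_sort -> lie_sort;
  lie_brDl : forall x y z, lie_br (x + y) z = lie_br x z + lie_br y z;
  lie_brDr : forall x y z, lie_br x (y + z) = lie_br x y + lie_br x z;
  lie_brZl : forall (a : R) x y, lie_br (a *: x) y = a *: lie_br x y;
  lie_brZr : forall (a : R) x y, lie_br x (a *: y) = a *: lie_br x y;
  lie_brxx : forall x, lie_br x x = 0;
  lie_jacobi : forall x y z,
    lie_br x (lie_br y z) + lie_br y (lie_br z x) + lie_br z (lie_br x y) = 0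
}.
Arguments lie_br {R l}.

Section LieDefs.
Variable R : nzRingType.

Definition lie_hom (L M : lieAlg R) (f : L -> M) : Prop :=
  (forall (a : R) (x y : L), f (a *: x + y) = a *: f x + f y) /\
  (forall x y : L, f (lie_br x y) = lie_br (f x) (f y)).

Definition span (V : lmodType R) (S : V -> Prop) : V -> Prop :=
  fun x => exists n (a : 'I_n -> R) (v : 'I_n -> V),
    (forall i, S (v i)) /\ x = \sum_(i < n) a i *: v i.

Definition lbr (L : lieAlg R) (A B : L -> Prop) : L -> Prop :=
  span (fun z => exists a b, [/\ A a, B b & z = lie_br a b]).

Definition comm_iter (L : lieAlg R) (I : L -> Prop) (i : nat) : L -> Prop :=
  iter i (fun S => lbr S (fun _ => True)) I.

(* lower central series: gamma L 1 = L, gamma L i.+1 = [gamma L i, L] *)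
Definition gamma (L : lieAlg R) (i : nat) : L -> Prop :=
  comm_iter (fun _ : L => True) i.-1.
Arguments gamma : clear implicits.

Definition nilpotent_class_le (L : lieAlg R) (c : nat) : Prop :=
  forall x, gamma L c.+1 x -> x = 0.

Definition is_free_nilpotent (c : nat) (X : Type) (L : lieAlg R) (iota : X -> L) : Prop :=
  nilpotent_class_le L c /\
  forall (M : lieAlg R), nilpotent_class_le M c -> forall f : X -> M,
    exists phi : L -> M, [/\ lie_hom phi, (forall x, phi (iota x) = f x) &
      forall psi : L -> M, lie_hom psi -> (forall x, psi (iota x) = f x) -> psi =1 phi].

Definition submodule (V : lmodType R) (S : V -> Prop) : Prop :=
  [/\ S 0, (forall x y, S x -> S y -> S (x + y)) & (forall (a : R) x, S x -> S (a *: x))].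

Definition is_ideal (L : lieAlg R) (I : L -> Prop) : Prop :=
  submodule I /\ forall x y, I x -> I (lie_br x y).

Definition is_ideal_in (L : lieAlg R) (H K : L -> Prop) : Prop :=
  [/\ forall x, K x -> H x, submodule K & forall x, lbr K H x -> K x].

Definition finite_index (L : lieAlg R) (I : L -> Prop) : Prop :=
  exists n (r : 'I_n -> L), forall x, exists i, I (x - r i).

(* j : L -> Lt exhibits Lt as L (x) R[1/p], i.e. (for R = Z_p) as L (x)_{Z_p} Q_p *)
Definition is_p_localization (L Lt : lieAlg R) (p : R) (j : L -> Lt) : Prop :=
  [/\ lie_hom j, injective j, bijective (fun y : Lt => p *: y) &
      forall y : Lt, exists k x, p ^+ k *: y = j x].

(* (1 / p^k) j(S) inside Lt *)
Definition pdiv_img (L Lt : lieAlg R) (j : L -> Lt) (p : R) (k : nat) (S : L -> Prop) : Lt -> Prop :=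
  fun y => exists2 x, S x & p ^+ k *: y = j x.

Definition sumsets (V : lmodType R) (n : nat) (S : 'I_n -> V -> Prop) : V -> Prop :=
  fun y => exists v : 'I_n -> V, (forall i, S i (v i)) /\ y = \sum_(i < n) v i.

End LieDefs.
Arguments gamma {R} L i.

From Pilot Require Import Defs.
From HB Require Import structures.
From mathcomp Require Import all_boot all_order all_algebra.
Import GRing.Theory.
Set Implicit Arguments. Unset Strict Implicit.
Local Open Scope ring_scope.

(* The Jacobi identity gives [[I, _i L], gamma_(k+1) L] <= [I, _(i+k+1) L].
   Hence the bracket of (1/p^i)[I, _i L] with (1/p^k) gamma_(k+1) L lies in
   (1/p^(i+k)) [I, _(i+k+1) L] = p (1/p^(i+k+1)) [I, _(i+k+1) L], which is p
   times a summand of Ihat when i+k+1 < c, and is 0 otherwise since L has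
   class at most c. *)

Section Submodules.
Variables (R : nzRingType) (V : lmodType R).
Implicit Types S T : V -> Prop.

Lemma submodule_sum S n (F : 'I_n -> V) :
  submodule S -> (forall i, S (F i)) -> S (\sum_(i < n) F i).
Proof. by move=> [S0 SD _] SF; apply: (big_ind S). Qed.

Lemma submoduleB S x y : submodule S -> S x -> S y -> S (x - y).
Proof. by move=> [_ SD SZ] Sx Sy; rewrite -scaleN1r; apply/SD/SZ. Qed.

Lemma span_sub_submodule S T :
  submodule S -> (forall v, T v -> S v) -> forall x, Defs.span T x -> S x.
Proof.
move=> sS TS x [n [a [v [Tv ->]]]].
by apply: submodule_sum => // i; case: sS => _ _; apply; apply: TS.
Qed.

Lemma mem_span T v : T v -> Defs.span T v.
Proof.
by exists 1%N, (fun=> 1), (fun=> v); split=> //; rewrite big_ord1 scale1r.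
Qed.

Lemma submodule_span T : submodule (Defs.span T).
Proof.
split.
- by exists 0%N, (fun=> 0), (fun=> 0); split; [case | rewrite big_ord0].
- move=> _ _ [n [a [v [Tv ->]]]] [m [b [w [Tw ->]]]].
  exists (n + m)%N, (fun i => match split i with inl k => a k | inr k => b k end),
    (fun i => match split i with inl k => v k | inr k => w k end); split.
  + by move=> i; case: (split i).
  + rewrite big_split_ord /=; congr (_ + _); apply: eq_bigr => i _.
    * by rewrite (unsplitK (inl _ i)).
    * by rewrite (unsplitK (inr _ i)).
- move=> c _ [n [a [v [Tv ->]]]].
  exists n, (fun i => c * a i), v; split=> //.
  by rewrite scaler_sumr; apply: eq_bigr => i _; rewrite scalerA.
Qed.

Lemma submodule_sumsets n (S : 'I_n -> V -> Prop) :
  (forall i, submodule (S i)) -> submodule (sumsets S).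
Proof.
move=> sS; split.
- by exists (fun=> 0); split; [move=> i; case: (sS i) | rewrite big1].
- move=> _ _ [v [Sv ->]] [w [Sw ->]]; exists (fun i => v i + w i).
  by split; [move=> i; case: (sS i) => _ SD _; apply: SD | rewrite big_split].
- move=> a _ [v [Sv ->]]; exists (fun i => a *: v i).
  by split; [move=> i; case: (sS i) => _ _ SZ; apply: SZ | rewrite scaler_sumr].
Qed.

Lemma sumsets_component n (S : 'I_n -> V -> Prop) i0 z :
  (forall i, S i 0) -> S i0 z -> sumsets S z.
Proof.
move=> S0 Sz; exists (fun i => if i == i0 then z else 0); split.
  by move=> i; case: eqP => [-> //|].
by rewrite (bigD1 i0) //= eqxx big1 ?addr0 // => i /negbTE ->.
Qed.

End Submodules.

Section LieBracket.
Variables (R : nzRingType) (L : lieAlg R).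
Implicit Types (x y z : L) (I : L -> Prop).
Local Notation br := (@lie_br R L).

Lemma lie_br0l x : br 0 x = 0.
Proof. by have := lie_brZl 0 (0 : L) x; rewrite !scale0r. Qed.

Lemma lie_br0r x : br x 0 = 0.
Proof. by have := lie_brZr 0 x (0 : L); rewrite !scale0r. Qed.

Lemma lie_brNl x y : br (- x) y = - br x y.
Proof. by rewrite -scaleN1r lie_brZl scaleN1r. Qed.

Lemma lie_brC x y : br x y = - br y x.
Proof.
apply/eqP; rewrite -addr_eq0; apply/eqP.
by have := lie_brxx (x + y); rewrite lie_brDl !lie_brDr !lie_brxx add0r addr0.
Qed.

Lemma lie_br_jacobiA x y z : br x (br y z) = br (br x y) z - br (br x z) y.
Proof.
have /eqP := lie_jacobi x y z.
rewrite (lie_brC y (br z x)) (lie_brC z (br x y)) (lie_brC z x) lie_brNl opprK.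
by rewrite -addrA addr_eq0 => /eqP ->; rewrite opprD opprK addrC.
Qed.

Lemma lie_br_suml n (F : 'I_n -> L) y :
  br (\sum_(i < n) F i) y = \sum_(i < n) br (F i) y.
Proof. exact: (big_morph (br^~ y) (fun a b => lie_brDl a b y) (lie_br0l y)). Qed.

Lemma lie_br_sumr n (F : 'I_n -> L) y :
  br y (\sum_(i < n) F i) = \sum_(i < n) br y (F i).
Proof. exact: (big_morph (br y) (lie_brDr y) (lie_br0r y)). Qed.

Lemma submodule_lie_brr_preim S x :
  submodule S -> submodule (fun w => S (br x w)).
Proof.
move=> [S0 SD SZ]; split; first by rewrite lie_br0r.
  by move=> a b Sa Sb; rewrite lie_brDr; apply: SD.
by move=> a b Sb; rewrite lie_brZr; apply: SZ.
Qed.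

Lemma submodule_comm_iter I k : submodule I -> submodule (comm_iter I k).
Proof. by case: k => [|k] // _; apply: submodule_span. Qed.

Lemma comm_iterS_br I k a b : comm_iter I k a -> comm_iter I k.+1 (br a b).
Proof. by move=> Ia; apply: mem_span; exists a, b. Qed.

Lemma comm_iterD I m n : comm_iter I (m + n) = comm_iter (comm_iter I n) m.
Proof. by rewrite /comm_iter iterD. Qed.

Lemma comm_iter_sub I J k :
  (forall x, I x -> J x) -> forall x, comm_iter I k x -> comm_iter J k x.
Proof.
move=> IJ; elim: k => [|k IH] //= x.
apply: span_sub_submodule; first exact: submodule_span.
by move=> _ [a [b [Ia _ ->]]]; apply: comm_iterS_br; apply: IH.
Qed.

Lemma comm_iter_gamma I k x : comm_iter I k x -> gamma L k.+1 x.
Proof. exact: comm_iter_sub. Qed.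

Lemma comm_iter_lie_br I i k x w : submodule I ->
  comm_iter I i x -> gamma L k.+1 w -> comm_iter I (i + k).+1 (br x w).
Proof.
move=> sI; elim: k i x w => [|k IH] i x w Ix Lw.
  by rewrite addn0; apply: comm_iterS_br.
move: w Lw; apply: span_sub_submodule.
  by apply: submodule_lie_brr_preim; apply: submodule_comm_iter.
move=> _ [y [z [Ly _ ->]]]; rewrite lie_br_jacobiA.
apply: submoduleB; first exact: submodule_comm_iter.
  by rewrite addnS; apply: comm_iterS_br; apply: IH.
by rewrite -addSnnS; apply: IH => //; apply: comm_iterS_br.
Qed.

Lemma comm_iter_nil I c n x :
  nilpotent_class_le L c -> (c <= n)%N -> comm_iter I n x -> x = 0.
Proof.
move=> nilL le_cn; rewrite -(subnKC le_cn) comm_iterD => Ix.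
by apply: nilL; apply: comm_iter_sub Ix.
Qed.

End LieBracket.

Section LieHom.
Variables (R : nzRingType) (L M : lieAlg R) (f : L -> M).
Hypothesis f_hom : lie_hom f.

Lemma lie_homD x y : f (x + y) = f x + f y.
Proof. by rewrite -[x]scale1r f_hom.1 !scale1r. Qed.

Lemma lie_hom0 : f 0 = 0.
Proof. by apply: (addrI (f 0)); rewrite -lie_homD !addr0. Qed.

Lemma lie_homZ a x : f (a *: x) = a *: f x.
Proof. by rewrite -[a *: x]addr0 f_hom.1 lie_hom0 addr0. Qed.

End LieHom.

Lemma scale_exp_eq0 (R : nzRingType) (V : lmodType R) (p : R) n (y : V) :
  bijective (fun v : V => p *: v) -> p ^+ n *: y = 0 -> y = 0.
Proof.
move=> [q pK _]; elim: n y => [|n IH] y; first by rewrite expr0 scale1r.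
by rewrite exprSr -scalerA => /IH py0; rewrite -(pK y) py0 -[RHS](pK 0) scaler0.
Qed.

Section Hat.
Variables (R : comNzRingType) (L Lt : lieAlg R) (j : L -> Lt) (p : R) (c : nat).
Variable I : L -> Prop.
Hypotheses (nilL : nilpotent_class_le L c) (j_hom : lie_hom j).
Hypotheses (p_bij : bijective (fun y : Lt => p *: y)) (sI : submodule I).

Definition hat_lie := sumsets (fun i : 'I_c => pdiv_img j p i (gamma L i.+1)).
Definition hat_ideal := sumsets (fun i : 'I_c => pdiv_img j p i (comm_iter I i)).
Definition scaled (S : Lt -> Prop) : Lt -> Prop :=
  fun y => exists2 z, S z & y = p *: z.

Lemma submodule_pdiv_img k (S : L -> Prop) :
  submodule S -> submodule (pdiv_img j p k S).
Proof.
move=> [S0 SD SZ]; split.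
- by exists 0 => //; rewrite scaler0 (lie_hom0 j_hom).
- move=> y1 y2 [x1 S1 E1] [x2 S2 E2]; exists (x1 + x2); first exact: SD.
  by rewrite scalerDr E1 E2 (lie_homD j_hom).
- move=> a y [x Sx E]; exists (a *: x); first exact: SZ.
  by rewrite scalerA mulrC -scalerA E (lie_homZ j_hom).
Qed.

Lemma submodule_hat_ideal : submodule hat_ideal.
Proof.
by apply: submodule_sumsets => i; apply/submodule_pdiv_img/submodule_comm_iter.
Qed.

Lemma submodule_scaled S : submodule S -> submodule (scaled S).
Proof.
move=> [S0 SD SZ]; split.
- by exists 0 => //; rewrite scaler0.
- move=> _ _ [z1 S1 ->] [z2 S2 ->].
  by exists (z1 + z2); [apply: SD | rewrite scalerDr].
- move=> a _ [z Sz ->].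
  by exists (a *: z); [apply: SZ | rewrite scalerA mulrC -scalerA].
Qed.

Lemma comm_iter_scaled_hat_ideal n x y :
  comm_iter I n.+1 x -> p ^+ n *: y = j x -> scaled hat_ideal y.
Proof.
move=> Ix Ey; have [q pK qK] := p_bij.
have [lt_nc | le_cn] := ltnP n.+1 c.
  exists (q y); last by rewrite qK.
  apply: (sumsets_component (i0 := Ordinal lt_nc)).
    by move=> i; case: (submodule_pdiv_img i (submodule_comm_iter i sI)).
  by exists x => //=; rewrite exprSr -scalerA qK.
exists 0; first by case: submodule_hat_ideal.
rewrite scaler0; apply: (scale_exp_eq0 (n := n) p_bij).
by rewrite Ey (comm_iter_nil nilL le_cn Ix) (lie_hom0 j_hom).
Qed.

Lemma lbr_hat_ideal_scaled y : lbr hat_ideal hat_lie y -> scaled hat_ideal y.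
Proof.
have sP := submodule_scaled submodule_hat_ideal.
apply: span_sub_submodule => // _ [_ [_ [[u [Iu ->]] [w [Lw ->]] ->]]].
rewrite lie_br_suml; apply: submodule_sum => // i.
rewrite lie_br_sumr; apply: submodule_sum => // k.
have [x Ix Eu] := Iu i; have [v Lv Ew] := Lw k.
apply: (comm_iter_scaled_hat_ideal (n := i + k) (x := lie_br x v)).
  exact: comm_iter_lie_br.
by rewrite j_hom.2 -Eu -Ew lie_brZl lie_brZr scalerA exprD.
Qed.

Lemma hat_ideal_in_hat_lie : is_ideal_in hat_lie hat_ideal.
Proof.
split.
- move=> _ [v [Iv ->]]; rewrite /hat_lie; exists v; split=> // i.
  by have [x Ix Ev] := Iv i; exists x => //; apply: comm_iter_gamma Ix.
- exact: submodule_hat_ideal.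
- move=> y /lbr_hat_ideal_scaled [z Iz ->].
  by case: submodule_hat_ideal => _ _; apply.
Qed.

End Hat.

Theorem lemma3p3 (p c d : nat) (L Lt : lieAlg (padic p)) (iota : 'I_d -> L)
    (j : L -> Lt) (I : L -> Prop) :
  prime p -> (0 < c)%N -> (0 < d)%N ->
  is_free_nilpotent c iota ->
  is_p_localization p%:R j ->
  is_ideal I -> finite_index I ->
  let Lhat := sumsets (fun i : 'I_c => pdiv_img j p%:R i (gamma L i.+1)) in
  let Ihat := sumsets (fun i : 'I_c => pdiv_img j p%:R i (comm_iter I i)) in
  (forall y, lbr Ihat Lhat y -> exists2 z, Ihat z & y = p%:R *: z) /\
  is_ideal_in Lhat Ihat.
Proof.
move=> _ _ _ [nilL _] [j_hom _ p_bij _] [sI _] _ Lhat Ihat.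
split; first exact: lbr_hat_ideal_scaled nilL j_hom p_bij sI.
exact: hat_ideal_in_hat_lie nilL j_hom p_bij sI.
Qed.
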